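(* For all typing environments $\Theta,\Gamma$, processes $P$ and session types $S$: (1) if $\Theta\cdot\Gamma\vdash P:S$ is not derivable, then there is a failing derivation of $\Theta\cdot\Gamma\vdash P:S$; (2) if there is a failing derivation of $\Theta\cdot\Gamma\vdash P:S$, then $\Theta\cdot\Gamma\vdash P:S$ is not derivable.
   Context: Values $v$, value variables $x$, process variables $X$; $a$ ranges over values and value variables; boolean predicates $A$ are type-checked by standard rules. Processes: $P,Q ::= \triangleleft \mathtt{l}(a).P \mid \triangleright\{\mathtt{l}_i(x_i).P_i\}_{i\in I} \mid \mu_X.P \mid X \mid \mathsf{if}\ A\ \mathsf{then}\ P\ \mathsf{else}\ Q \mid \mathbf{0}$ (guarded recursion). Base types $\mathsf{B}$ ($\mathsf{Int},\mathsf{Str},\mathsf{Bool},\dots$, tuples). Session types $S ::= \oplus\{!\mathtt{l}_i(\mathsf{B}_i).S_i\}_{i\in I} \mid \&\{?\mathtt{l}_i(\mathsf{B}_i).S_i\}_{i\in I} \mid \mathsf{rec}\ X.S \mid X \mid \mathsf{end}$, $I\neq\emptyset$, labels pairwise distinct, guarded recursion, equi-recursive. Typing judgements $\Theta\cdot\Gamma\vdash P:S$ with $\Theta$ a partial map from process variables to session types and $\Gamma$ a partial map from value variables to base types; $\Gamma\vdash x:\mathsf{B}$ if $\Gamma(x)=\mathsf{B}$, $\Gamma\vdash v:\mathsf{B}$ if $v\in\mathsf{B}$. Derivability is by the rules: (tBra) if for all $i\in I$, $\Theta\cdot\Gamma,x_i:\mathsf{B}_i\vdash P_i:S_i$, then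 $\Theta\cdot\Gamma\vdash \triangleright\{\mathtt{l}_i(x_i).P_i\}_{i\in I\cup J} : \&\{?\mathtt{l}_i(\mathsf{B}_i).S_i\}_{i\in I}$; (tSel) if some $i\in I$ has $\mathtt{l}=\mathtt{l}_i$, $\Gamma\vdash a:\mathsf{B}_i$ and $\Theta\cdot\Gamma\vdash P:S_i$, then $\Theta\cdot\Gamma\vdash \triangleleft\mathtt{l}(a).P : \oplus\{!\mathtt{l}_i(\mathsf{B}_i).S_i\}_{i\in I}$; (tRec) $\Theta,X:S\cdot\Gamma\vdash P:S$ implies $\Theta\cdot\Gamma\vdash\mu_X.P:S$; (tPVar) $\Theta(X)=S$ implies $\Theta\cdot\Gamma\vdash X:S$; (tIf) $\Gamma\vdash A:\mathsf{Bool}$, $\Theta\cdot\Gamma\vdash P:S$, $\Theta\cdot\Gamma\vdash Q:S$ imply $\Theta\cdot\Gamma\vdash \mathsf{if}\ A\ \mathsf{then}\ P\ \mathsf{else}\ Q:S$; (tNil) $\Theta\cdot\Gamma\vdash\mathbf{0}:\mathsf{end}$. Rule function $\Phi$, mapping a judgement $J=\Theta\cdot\Gamma\vdash P:S$ to a set: $\Phi(J)=\{\Theta\cdot\Gamma,x_i:\mathsf{B}_i\vdash P_i:S_i\}_{i\in I}$ if $P=\triangleright\{\mathtt{l}_j(x_j).P_j\}_{j\in I\cup J'}$ and $S=\&\{?\mathtt{l}_i(\mathsf{B}_i).S_i\}_{i\in I}$ for some $I,J'$; $\Phi(J)=\{\Theta\cdot\Gamma\vdash P':S_i\}$ if $P=\triangleleft\mathtt{l}(a).P'$,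 $S=\oplus\{!\mathtt{l}_i(\mathsf{B}_i).S_i\}_{i\in I}$ and there is $i\in I$ with $\mathtt{l}=\mathtt{l}_i$ and $\Gamma\vdash a:\mathsf{B}_i$; $\Phi(J)=\{\Theta\cdot\Gamma\vdash P_1:S,\ \Theta\cdot\Gamma\vdash Q_1:S\}$ if $P=\mathsf{if}\ A\ \mathsf{then}\ P_1\ \mathsf{else}\ Q_1$ and $\Gamma\vdash A:\mathsf{Bool}$; $\Phi(J)=\{\Theta,X:S\cdot\Gamma\vdash P':S\}$ if $P=\mu_X.P'$; $\Phi(J)=\{\mathsf{tt}\}$ if $P=\mathbf{0}$ and $S=\mathsf{end}$, or if $P=X$ and $\Theta(X)=S$; $\Phi(J)=\emptyset$ in all other cases. A failing derivation of $\Theta\cdot\Gamma\vdash P:S$ is a finite sequence of judgements $(J_0,J_1,\dots,J_n)$, each of the form $\Theta_i\cdot\Gamma_i\vdash P_i:S_i$, such that $J_0=\Theta\cdot\Gamma\vdash P:S$, $J_i\in\Phi(J_{i-1})$ for all $i\in 1..n$, and $\Phi(J_n)=\emptyset$. *)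

From Stdlib Require Import List String ZArith Bool PeanoNat.
Import ListNotations.
Set Implicit Arguments.

Definition label := nat.
Definition vvar := nat.
Definition pvar := nat.
Definition tvar := nat.   (* session-type recursion variables *)

Inductive base : Type :=
| BInt | BStr | BBool | BTuple (bs : list base).

Inductive value : Type :=
| VInt (z : Z) | VStr (s : string) | VBool (b : bool) | VTuple (vs : list value).

Inductive value_in : value -> base -> Prop :=
| vin_int z : value_in (VInt z) BInt
| vin_str s : value_in (VStr s) BStr
| vin_bool b : value_in (VBool b) BBool
| vin_tuple vs bs : Forall2 value_in vs bs -> value_in (VTuple vs) (BTuple bs).

Inductive atom : Type := AVal (v : value) | AVar (x : vvar).

Definition venv := vvar -> option base.
Definition vupd (G : venv) (x : vvar) (B : base) : venv :=
  fun y => if Nat.eqb y x then Some B else G y.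

Inductive atom_ty (G : venv) : atom -> base -> Prop :=
| at_val v B : value_in v B -> atom_ty G (AVal v) B
| at_var x B : G x = Some B -> atom_ty G (AVar x) B.

(* Session types (syntax); equi-recursion is handled by unfolding below. *)
Inductive ty : Type :=
| TSel (bs : list (label * base * ty))   (* (+){ !l_i(B_i).S_i } *)
| TBra (bs : list (label * base * ty))   (* &{ ?l_i(B_i).S_i } *)
| TRec (X : tvar) (S : ty)
| TVar (X : tvar)
| TEnd.

Fixpoint tsubst (X : tvar) (T : ty) (S : ty) : ty :=
  match S with
  | TSel bs => TSel (map (fun b => let '(l, B, S') := b in (l, B, tsubst X T S')) bs)
  | TBra bs => TBra (map (fun b => let '(l, B, S') := b in (l, B, tsubst X T S')) bs)
  | TRec Y S' => if Nat.eqb X Y then TRec Y S' else TRec Y (tsubst X T S')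
  | TVar Y => if Nat.eqb X Y then T else TVar Y
  | TEnd => TEnd
  end.

Inductive unfolds : ty -> ty -> Prop :=
| unf_sel bs : unfolds (TSel bs) (TSel bs)
| unf_bra bs : unfolds (TBra bs) (TBra bs)
| unf_var X : unfolds (TVar X) (TVar X)
| unf_end : unfolds TEnd TEnd
| unf_rec X S H : unfolds (tsubst X (TRec X S) S) H -> unfolds (TRec X S) H.

Fixpoint tlookup (l : label) (bs : list (label * base * ty)) : option (base * ty) :=
  match bs with
  | [] => None
  | (l', B, T) :: bs' => if Nat.eqb l l' then Some (B, T) else tlookup l bs'
  end.

Definition is_bra (S : ty) (bs : list (label * base * ty)) : Prop :=
  unfolds S (TBra bs) /\ bs <> [].
Definition is_sel (S : ty) (bs : list (label * base * ty)) : Prop :=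
  unfolds S (TSel bs) /\ bs <> [].

(* Equi-recursive equality of session types (bisimilarity up to unfolding). *)
CoInductive teq : ty -> ty -> Prop :=
| teq_end S T : unfolds S TEnd -> unfolds T TEnd -> teq S T
| teq_var S T X : unfolds S (TVar X) -> unfolds T (TVar X) -> teq S T
| teq_sel S T bs1 bs2 :
    unfolds S (TSel bs1) -> unfolds T (TSel bs2) ->
    (forall l, tlookup l bs1 = None <-> tlookup l bs2 = None) ->
    (forall l B1 S1 B2 S2, tlookup l bs1 = Some (B1, S1) ->
        tlookup l bs2 = Some (B2, S2) -> B1 = B2 /\ teq S1 S2) ->
    teq S T
| teq_bra S T bs1 bs2 :
    unfolds S (TBra bs1) -> unfolds T (TBra bs2) ->
    (forall l, tlookup l bs1 = None <-> tlookup l bs2 = None) ->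
    (forall l B1 S1 B2 S2, tlookup l bs1 = Some (B1, S1) ->
        tlookup l bs2 = Some (B2, S2) -> B1 = B2 /\ teq S1 S2) ->
    teq S T.

Definition tenv := pvar -> option ty.
Definition tupd (Th : tenv) (X : pvar) (S : ty) : tenv :=
  fun Y => if Nat.eqb Y X then Some S else Th Y.

Section Processes.
(* Boolean predicates A: an arbitrary language with an arbitrary ("standard")
   typing relation  Gamma |- A : B. *)
Variable Pred : Type.

Inductive proc : Type :=
| PSel (l : label) (a : atom) (P : proc)            (* <| l(a).P *)
| PBra (bs : list (label * vvar * proc))            (* |> { l_i(x_i).P_i } *)
| PRec (X : pvar) (P : proc)
| PVar (X : pvar)
| PIf (A : Pred) (P Q : proc)
| PNil.

Fixpoint plookup (l : label) (bs : list (label * vvar * proc)) : option (vvar * proc) :=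
  match bs with
  | [] => None
  | (l', x, Q) :: bs' => if Nat.eqb l l' then Some (x, Q) else plookup l bs'
  end.

Variable pred_ty : venv -> Pred -> base -> Prop.

Inductive typed : tenv -> venv -> proc -> ty -> Prop :=
| tBra Th G pbs S tbs :
    is_bra S tbs ->
    (forall l B S', In (l, B, S') tbs ->
       exists x P', plookup l pbs = Some (x, P') /\ typed Th (vupd G x B) P' S') ->
    typed Th G (PBra pbs) S
| tSel Th G l a P S tbs B Si :
    is_sel S tbs -> tlookup l tbs = Some (B, Si) -> atom_ty G a B ->
    typed Th G P Si -> typed Th G (PSel l a P) S
| tRec Th G X P S : typed (tupd Th X S) G P S -> typed Th G (PRec X P) S
| tPVar Th G X S T : Th X = Some T -> teq T S -> typed Th G (PVar X) S
| tIf Th G A P Q S :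
    pred_ty G A BBool -> typed Th G P S -> typed Th G Q S -> typed Th G (PIf A P Q) S
| tNil Th G S : unfolds S TEnd -> typed Th G PNil S.

Record judg : Type := Judg { jTheta : tenv; jGamma : venv; jProc : proc; jTy : ty }.

(* Rule function: Phi J o  means  o \in Phi(J), with None standing for tt. *)
Inductive Phi : judg -> option judg -> Prop :=
| phi_bra Th G pbs S tbs l B S' x P' :
    is_bra S tbs ->
    (forall l0 B0 S0, In (l0, B0, S0) tbs -> exists x0 P0, plookup l0 pbs = Some (x0, P0)) ->
    In (l, B, S') tbs -> plookup l pbs = Some (x, P') ->
    Phi (Judg Th G (PBra pbs) S) (Some (Judg Th (vupd G x B) P' S'))
| phi_sel Th G l a P S tbs B Si :
    is_sel S tbs -> tlookup l tbs = Some (B, Si) -> atom_ty G a B ->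
    Phi (Judg Th G (PSel l a P) S) (Some (Judg Th G P Si))
| phi_if_l Th G A P Q S :
    pred_ty G A BBool -> Phi (Judg Th G (PIf A P Q) S) (Some (Judg Th G P S))
| phi_if_r Th G A P Q S :
    pred_ty G A BBool -> Phi (Judg Th G (PIf A P Q) S) (Some (Judg Th G Q S))
| phi_rec Th G X P S :
    Phi (Judg Th G (PRec X P) S) (Some (Judg (tupd Th X S) G P S))
| phi_nil Th G S : unfolds S TEnd -> Phi (Judg Th G PNil S) None
| phi_var Th G X S T : Th X = Some T -> teq T S -> Phi (Judg Th G (PVar X) S) None.

Definition Phi_empty (J : judg) : Prop := forall o, ~ Phi J o.

(* (J, js_0, ..., js_{n-1}) is a failing derivation of J *)
Definition failing_derivation (J : judg) (js : list judg) : Prop :=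
  (forall i, i < List.length js -> Phi (nth i (J :: js) J) (Some (nth i js J))) /\
  Phi_empty (last js J).

End Processes.

From Stdlib Require Import List Classical Lia Wf_nat.
Import ListNotations.
Set Implicit Arguments.

(* Since unfolding a session type is deterministic, Phi(J) lists exactly the
   premises of the unique rule that could conclude J, so J is derivable iff
   Phi(J) is nonempty and all judgements in Phi(J) are derivable.  Derivability
   therefore propagates along any Phi-chain, and cannot reach a judgement with
   empty Phi: a failing derivation refutes its root.  Conversely an underivable
   judgement either has empty Phi or an underivable premise with a strictly
   smaller process; following such premises yields a failing derivation. *)

Fixpoint psize {Pred : Type} (P : proc Pred) : nat :=
  match P with
  | PSel _ _ Q => S (psize Q)
  | PBra bs => S (list_sum (map (fun '(_, _, Q) => psize Q) bs))
  | PRec _ Q => S (psize Q)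
  | PVar _ _ => 1
  | PIf _ Q R => S (psize Q + psize R)
  | PNil _ => 1
  end.

Lemma plookup_psize_lt {Pred : Type} l (bs : list (label * vvar * proc Pred)) x Q :
  plookup l bs = Some (x, Q) -> psize Q < psize (PBra bs).
Proof.
  induction bs as [|[[l' x'] Q'] bs IH]; simpl; [discriminate|].
  destruct (Nat.eqb l l'); intros Hl.
  - injection Hl as <- <-. lia.
  - specialize (IH Hl). simpl in IH. lia.
Qed.

Lemma unfolds_functional S H1 H2 : unfolds S H1 -> unfolds S H2 -> H1 = H2.
Proof.
  intros U; revert H2; induction U; intros H2 U2; inversion U2; subst; auto.
Qed.

Lemma is_bra_functional S bs1 bs2 : is_bra S bs1 -> is_bra S bs2 -> bs1 = bs2.
Proof.
  intros [U1 _] [U2 _]. now injection (unfolds_functional U1 U2).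
Qed.

Lemma is_sel_functional S bs1 bs2 : is_sel S bs1 -> is_sel S bs2 -> bs1 = bs2.
Proof.
  intros [U1 _] [U2 _]. now injection (unfolds_functional U1 U2).
Qed.

Lemma last_cons {A : Type} (a : A) l d : last (a :: l) d = last l a.
Proof.
  revert a d; induction l as [|b l IH]; intros a d; [reflexivity|].
  change (last (a :: b :: l) d) with (last (b :: l) d). now rewrite !IH.
Qed.

Section FailingDerivations.

Variable Pred : Type.
Variable pred_ty : venv -> Pred -> base -> Prop.

Definition typed_judg (J : judg Pred) : Prop :=
  typed pred_ty (jTheta J) (jGamma J) (jProc J) (jTy J).

Lemma Phi_psize_lt J J' : Phi pred_ty J (Some J') -> psize (jProc J') < psize (jProc J).
Proof.
  intros Ph; inversion Ph; subst; simpl; try lia.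
  eapply plookup_psize_lt; eassumption.
Qed.

Lemma typed_Phi_premise J J' : typed_judg J -> Phi pred_ty J (Some J') -> typed_judg J'.
Proof.
  unfold typed_judg; intros T Ph; inversion Ph; subst; simpl in *; inversion T; subst;
    try assumption.
  - match goal with
    | Hb : is_bra _ tbs, Hb' : is_bra _ ?tbs' |- _ =>
        rewrite <- (is_bra_functional Hb Hb') in *
    end.
    match goal with
    | Hall : forall l B S', In (l, B, S') tbs -> _, Hin : In (l, B, S') tbs |- _ =>
        destruct (Hall _ _ _ Hin) as (x0 & P0 & Hl0 & T0)
    end.
    congruence.
  - match goal with
    | Hb : is_sel _ tbs, Hb' : is_sel _ ?tbs' |- _ =>
        rewrite <- (is_sel_functional Hb Hb') in *
    end.
    congruence.
Qed.

Lemma typed_Phi_nonempty J : typed_judg J -> ~ Phi_empty pred_ty J.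
Proof.
  destruct J as [Th G P S]; unfold typed_judg, Phi_empty; simpl; intros T NE.
  inversion T; subst.
  - match goal with Hb : is_bra S tbs |- _ => destruct Hb as [U Hne] end.
    destruct tbs as [|[[l B] S'] tbs]; [congruence|].
    match goal with Hall : forall l B S', In (l, B, S') _ -> _ |- _ =>
      destruct (Hall l B S' (or_introl eq_refl)) as (x & P' & Hl & _);
      eapply NE, phi_bra; [split; eassumption | | left; reflexivity | exact Hl];
      intros l0 B0 S0 Hin; destruct (Hall _ _ _ Hin) as (x0 & P0 & Hl0 & _); eauto
    end.
  - eapply NE, phi_sel; eassumption.
  - eapply NE, phi_rec.
  - eapply NE, phi_var; eassumption.
  - eapply NE, phi_if_l; eassumption.
  - eapply NE, phi_nil; eassumption.
Qed.

Lemma typed_of_Phi_premises J :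
  ~ Phi_empty pred_ty J ->
  (forall J', Phi pred_ty J (Some J') -> typed_judg J') -> typed_judg J.
Proof.
  destruct J as [Th G P S]; unfold typed_judg, Phi_empty; simpl; intros NE Prem.
  apply not_all_ex_not in NE as [o Ph]; apply NNPP in Ph.
  inversion Ph; subst.
  - eapply tBra; [eassumption|]; intros l0 B0 S0 Hin.
    match goal with Hall : forall l B S', In (l, B, S') _ -> exists x P, _ |- _ =>
      destruct (Hall _ _ _ Hin) as (x0 & P0 & Hl0)
    end.
    exists x0, P0; split; [exact Hl0|].
    apply (Prem (Judg Th (vupd G x0 B0) P0 S0)); eapply phi_bra; eassumption.
  - eapply tSel; try eassumption; apply (Prem (Judg Th G P0 Si)); eapply phi_sel; eassumption.
  - eapply tIf; [eassumption | apply (Prem (Judg Th G P0 S)) | apply (Prem (Judg Th G Q S))];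
      constructor; assumption.
  - eapply tIf; [eassumption | apply (Prem (Judg Th G P0 S)) | apply (Prem (Judg Th G Q S))];
      constructor; assumption.
  - apply tRec, (Prem (Judg (tupd Th X S) G P0 S)), phi_rec.
  - now apply tNil.
  - eapply tPVar; eassumption.
Qed.

Lemma failing_derivation_nil J : failing_derivation pred_ty J [] <-> Phi_empty pred_ty J.
Proof.
  unfold failing_derivation; simpl; split; [tauto|].
  intros E; split; [intros i Hi; lia | exact E].
Qed.

Lemma failing_derivation_cons J J' js :
  failing_derivation pred_ty J (J' :: js) <->
  Phi pred_ty J (Some J') /\ failing_derivation pred_ty J' js.
Proof.
  unfold failing_derivation; rewrite last_cons.
  assert (Hnth : forall l i, i < length l -> nth i l J = nth i l J')
    by (intros l i Hi; apply nth_indep; exact Hi).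
  split.
  - intros [Chain E]; split; [apply (Chain 0); simpl; lia|]; split; [|exact E].
    intros i Hi; rewrite <- (Hnth (J' :: js)), <- Hnth by (simpl; lia).
    exact (Chain (S i) ltac:(simpl; lia)).
  - intros [Ph [Chain E]]; split; [|exact E].
    intros [|i] Hi; [exact Ph|]; simpl in Hi.
    change (Phi pred_ty (nth i (J' :: js) J) (Some (nth i js J))).
    rewrite (Hnth (J' :: js)), Hnth by (simpl; lia).
    apply Chain; lia.
Qed.

Lemma failing_derivation_not_typed J js :
  failing_derivation pred_ty J js -> ~ typed_judg J.
Proof.
  revert J; induction js as [|J' js IH]; intros J Fail T.
  - apply failing_derivation_nil in Fail. exact (typed_Phi_nonempty T Fail).
  - apply failing_derivation_cons in Fail as [Ph Fail].
    exact (IH J' Fail (typed_Phi_premise T Ph)).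
Qed.

Lemma not_typed_failing_derivation J :
  ~ typed_judg J -> exists js, failing_derivation pred_ty J js.
Proof.
  induction J as [J IH] using (well_founded_induction
    (well_founded_ltof _ (fun J : judg Pred => psize (jProc J)))).
  intros NT.
  destruct (classic (Phi_empty pred_ty J)) as [E|NE].
  - exists []. now apply failing_derivation_nil.
  - assert (Bad : exists J', Phi pred_ty J (Some J') /\ ~ typed_judg J').
    { apply NNPP; intros NoBad; apply NT, typed_of_Phi_premises; [exact NE|].
      intros J' Ph; apply NNPP; intros NT'; apply NoBad; eauto. }
    destruct Bad as [J' [Ph NT']].
    destruct (IH J' (Phi_psize_lt Ph) NT') as [js Fail].
    exists (J' :: js). now apply failing_derivation_cons.
Qed.

End FailingDerivations.

Theorem mainTheorem5 (Pred : Type) (pred_ty : venv -> Pred -> base -> Prop)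
    (Th : tenv) (G : venv) (P : proc Pred) (S : ty) :
  (~ typed pred_ty Th G P S ->
     exists js, failing_derivation pred_ty (Judg Th G P S) js) /\
  ((exists js, failing_derivation pred_ty (Judg Th G P S) js) ->
     ~ typed pred_ty Th G P S).
Proof.
  split.
  - exact (@not_typed_failing_derivation _ pred_ty (Judg Th G P S)).
  - intros [js Fail]. exact (failing_derivation_not_typed Fail).
Qed.
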